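(* Suppose all type sets are equal, $\Theta_i=\Theta_0$ for all $i$, and let $h=(h_1,\dots,h_n)$ determine a Groves mechanism (for an efficient decision function $f$). Define $h':\Theta_0^{n-1}\to\mathbb{R}$ by $$h'(x):=\frac{1}{n!}\sum_{\pi\in\Pi(n-1)}\sum_{j=1}^n h_j(x^\pi),$$ where $\Pi(n-1)$ is the set of permutations of $\{1,\dots,n-1\}$ and $x^\pi_i:=x_{\pi^{-1}(i)}$; $h'$ determines an anonymous Groves mechanism. Let $G(\theta):=\sum_{j=1}^n v_j(f(\theta),\theta_j)$ and assume $G(\theta)=G(\theta^\pi)$ for all $\theta\in\Theta$ and all permutations $\pi$ of $\{1,\dots,n\}$ (where $\theta^\pi_i:=\theta_{\pi^{-1}(i)}$). Then: (i) if the Groves mechanism $h$ is feasible, so is $h'$; (ii) if an anonymous Groves mechanism $h^0$ is welfare dominated by $h$, then $h^0$ is welfare dominated by $h'$.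
   Context: Setting: decisions $D$, players $1,\dots,n$ ($n\ge 2$), type sets $\Theta_i$, $\Theta=\prod_i\Theta_i$, initial utilities $v_i:D\times\Theta_i\to\mathbb{R}$; a tax-based mechanism $(f,t)$ gives player $i$ final utility $v_i(f(\theta),\theta_i)+t_i(\theta)$. A Groves mechanism has $f(\theta)\in\arg\max_{d\in D}\sum_i v_i(d,\theta_i)$ and $t_i(\theta)=\sum_{j\ne i}v_j(f(\theta),\theta_j)+h_i(\theta_{-i})$ for arbitrary functions $h_i$ of the other players' types; it is identified with $(h_1,\dots,h_n)$. It is anonymous if all $\Theta_i$ are equal and all $h_i$ equal a single function $h$ that is permutation independent (symmetric in its $n-1$ arguments). A mechanism is feasible if $\sum_i t_i(\theta)\le 0$ for all $\theta$. For mechanisms with the same decision function, $t'$ welfare dominates $t$ if $\sum_i t_i(\theta)\le\sum_i t'_i(\theta)$ for all $\theta$, with strict inequality for some $\theta$. *)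

From HB Require Import structures.
From mathcomp Require Import all_boot all_order all_algebra all_fingroup.
Set Implicit Arguments. Unset Strict Implicit. Unset Printing Implicit Defensive.
Import Order.TTheory GRing.Theory Num.Theory.
Local Open Scope ring_scope.

Section Groves.
Variables (R : realFieldType) (D Theta0 : Type) (n : nat).

(* type profile of the other players: theta_{-i}, indexed by 'I_n.-1 via lift i *)
Definition others (theta : 'I_n -> Theta0) (i : 'I_n) : 'I_n.-1 -> Theta0 :=
  fun k => theta (lift i k).

Definition permute {m : nat} (x : 'I_m -> Theta0) (pi : {perm 'I_m}) : 'I_m -> Theta0 :=
  fun i => x ((pi^-1)%g i).

Definition Gsum (v : 'I_n -> D -> Theta0 -> R) (f : ('I_n -> Theta0) -> D)
  (theta : 'I_n -> Theta0) : R :=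
  \sum_(j < n) v j (f theta) (theta j).

Definition efficient (v : 'I_n -> D -> Theta0 -> R) (f : ('I_n -> Theta0) -> D) : Prop :=
  forall theta d, \sum_(j < n) v j d (theta j) <= \sum_(j < n) v j (f theta) (theta j).

Definition groves_tax (v : 'I_n -> D -> Theta0 -> R) (f : ('I_n -> Theta0) -> D)
  (h : 'I_n -> ('I_n.-1 -> Theta0) -> R) (i : 'I_n) (theta : 'I_n -> Theta0) : R :=
  \sum_(j < n | j != i) v j (f theta) (theta j) + h i (others theta i).

Definition feasible (t : 'I_n -> ('I_n -> Theta0) -> R) : Prop :=
  forall theta, \sum_(i < n) t i theta <= 0.

Definition welfare_dominates (t' t : 'I_n -> ('I_n -> Theta0) -> R) : Prop :=
  (forall theta, \sum_(i < n) t i theta <= \sum_(i < n) t' i theta) /\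
  (exists theta, \sum_(i < n) t i theta < \sum_(i < n) t' i theta).

Definition perm_indep (h : ('I_n.-1 -> Theta0) -> R) : Prop :=
  forall x (pi : {perm 'I_n.-1}), h (permute x pi) = h x.

Definition anon (h : ('I_n.-1 -> Theta0) -> R) : 'I_n -> ('I_n.-1 -> Theta0) -> R :=
  fun _ => h.

Definition symmetrize (h : 'I_n -> ('I_n.-1 -> Theta0) -> R) : ('I_n.-1 -> Theta0) -> R :=
  fun x => (n`!%:R)^-1 * \sum_(pi : {perm 'I_n.-1}) \sum_(j < n) h j (permute x pi).

End Groves.

(* For player profiles theta on n = m+1 players, the total tax of a Groves
   mechanism h splits as  G(theta) *+ m + sum_i h_i(theta_{-i}), where G is the
   total initial utility.  The key combinatorial fact is that, for every j,
     sum_i sum_{pi in S_m} F(theta_{-i}^pi) = sum_{s in S_n} F((theta^s)_{-j}),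
   proved by splitting S_n according to the value s j = i and identifying the
   permutations with s j = i with S_m through [lift_perm j i].  Summing over j
   shows that the total tax of the symmetrized mechanism h' at theta is the
   average over all s in S_n of the total tax of h at theta^s (using that G is
   symmetric).  An anonymous mechanism h0 is its own symmetrization, so its total
   tax equals its own average as well.  Feasibility and welfare dominance then
   transfer because averaging over S_n is monotone, and strictly monotone at a
   point where the strict inequality holds (the identity permutation occurs). *)

From HB Require Import structures.
From mathcomp Require Import all_boot all_order all_algebra all_fingroup.
From Stdlib Require Import FunctionalExtensionality.
Set Implicit Arguments. Unset Strict Implicit. Unset Printing Implicit Defensive.
Import Order.TTheory GRing.Theory Num.Theory.
Local Open Scope ring_scope.

(* Removing the point j and its image from a permutation s of 'I_m.+1 gives a
   permutation of 'I_m; it is inverse to [lift_perm j (s j)]. *)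
Section UnliftPerm.
Variable m : nat.
Implicit Types (j : 'I_m.+1) (s : 'S_m.+1).

Definition unlift_perm_fun j s (k : 'I_m) : 'I_m :=
  odflt k (unlift (s j) (s (lift j k))).

Lemma lift_unlift_perm_fun j s k : lift (s j) (unlift_perm_fun j s k) = s (lift j k).
Proof.
rewrite /unlift_perm_fun; have:= neq_lift j k.
by rewrite -(can_eq (permK s)) => /unlift_some[] ? ? ->.
Qed.

Lemma unlift_perm_fun_inj j s : injective (unlift_perm_fun j s).
Proof.
apply: can_inj (unlift_perm_fun (s j) s^-1%g) _ => k.
by rewrite {1}/unlift_perm_fun lift_unlift_perm_fun !permK liftK.
Qed.

Definition unlift_perm j s : 'S_m := perm (@unlift_perm_fun_inj j s).

Lemma unlift_lift_perm j i (pi : 'S_m) : unlift_perm j (lift_perm j i pi) = pi.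
Proof.
by apply/permP => k; rewrite permE /unlift_perm_fun lift_perm_lift lift_perm_id liftK.
Qed.

Lemma lift_unlift_perm j s : lift_perm j (s j) (unlift_perm j s) = s.
Proof.
apply/permP => k; case: (unliftP j k) => [k'|] ->; rewrite ?lift_perm_id //.
by rewrite lift_perm_lift permE lift_unlift_perm_fun.
Qed.

Lemma big_perm_sends (V : nmodType) (F : 'S_m.+1 -> V) j i :
  \sum_(s : 'S_m.+1 | s j == i) F s = \sum_(pi : 'S_m) F (lift_perm j i pi).
Proof.
rewrite (reindex (lift_perm j i)) /=.
  by apply: eq_bigl => pi; rewrite lift_perm_id eqxx.
exists (unlift_perm j) => [pi _ | s /eqP <-]; first exact: unlift_lift_perm.
exact: lift_unlift_perm.
Qed.

End UnliftPerm.

Section Profiles.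
Variable T : Type.

Lemma permute1 m (x : 'I_m -> T) : permute x 1%g = x.
Proof. by apply: functional_extensionality => k; rewrite /permute invg1 perm1. Qed.

Lemma permuteM m (x : 'I_m -> T) (p q : 'S_m) :
  permute (permute x p) q = permute x (p * q).
Proof. by apply: functional_extensionality => k; rewrite /permute invMg permM. Qed.

Lemma others_permute_lift_perm m (theta : 'I_m.+1 -> T) j i (pi : 'S_m) :
  others (permute theta (lift_perm j i pi)^-1) j = permute (others theta i) pi^-1.
Proof.
apply: functional_extensionality => k.
by rewrite /others /permute !invgK lift_perm_lift.
Qed.

Lemma sum_others_permute (V : nmodType) m (F : ('I_m -> T) -> V)
    (theta : 'I_m.+1 -> T) (j : 'I_m.+1) :
  \sum_(i < m.+1) \sum_(pi : 'S_m) F (permute (others theta i) pi) =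
  \sum_(s : 'S_m.+1) F (others (permute theta s) j).
Proof.
rewrite [RHS](reindex_inj invg_inj) /=.
rewrite (partition_big (fun s : 'S_m.+1 => s j) xpredT) //=.
apply: eq_bigr => i _; rewrite big_perm_sends.
rewrite (reindex_inj (@invg_inj (perm_of 'I_m))) /=.
by apply: eq_bigr => pi _; rewrite others_permute_lift_perm.
Qed.

End Profiles.

Section PermAverage.
Variables (R : realFieldType) (T : Type) (n : nat).
Implicit Types (g : ('I_n -> T) -> R) (theta : 'I_n -> T).

Definition perm_average g theta : R :=
  (n`!%:R)^-1 * \sum_(s : 'S_n) g (permute theta s).

Lemma inv_fact_gt0 : 0 < (n`!%:R : R)^-1.
Proof. by rewrite invr_gt0 ltr0n fact_gt0. Qed.

Lemma mul_inv_fact_natr (x : R) : (n`!%:R)^-1 * (x *+ n`!) = x.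
Proof.
by rewrite -[x *+ _]mulr_natr mulrC mulfK // pnatr_eq0 -lt0n fact_gt0.
Qed.

(* Averaging is monotone, and strictly monotone at a point of strict
   inequality since the identity permutation contributes that point. *)
Lemma perm_average_le0 g theta :
  (forall theta', g theta' <= 0) -> perm_average g theta <= 0.
Proof.
move=> g_le0; rewrite /perm_average pmulr_rle0 ?inv_fact_gt0 //.
by rewrite sumr_le0.
Qed.

Lemma ler_perm_average g1 g2 theta :
  (forall theta', g1 theta' <= g2 theta') -> perm_average g1 theta <= perm_average g2 theta.
Proof.
move=> le_g; rewrite ler_pM2l ?inv_fact_gt0 //.
exact: ler_sum.
Qed.

Lemma ltr_perm_average g1 g2 theta :
  (forall theta', g1 theta' <= g2 theta') -> g1 theta < g2 theta ->
  perm_average g1 theta < perm_average g2 theta.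
Proof.
move=> le_g lt_g; rewrite ltr_pM2l ?inv_fact_gt0 //.
rewrite (bigD1 1%g) // [X in _ < X](bigD1 1%g) //= !permute1.
by apply: ltr_leD => //; apply: ler_sum.
Qed.

End PermAverage.

Section Symmetrization.
Variables (R : realFieldType) (T : Type) (m : nat).

Lemma symmetrize_perm_indep (h : 'I_m.+1 -> ('I_m -> T) -> R) :
  perm_indep (symmetrize h).
Proof.
move=> x pi; rewrite /symmetrize; congr (_ * _).
rewrite [RHS](reindex_inj (mulgI pi)) /=.
by apply: eq_bigr => s _; rewrite permuteM.
Qed.

Lemma symmetrize_anon (h0 : ('I_m -> T) -> R) :
  @perm_indep R T m.+1 h0 -> symmetrize (@anon R T m.+1 h0) =1 h0.
Proof.
move=> h0_indep x; rewrite /symmetrize /anon.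
under eq_bigr => s _ do under eq_bigr => j _ do rewrite h0_indep.
by rewrite !sumr_const card_Sn card_ord -mulrnA -factS mul_inv_fact_natr.
Qed.

Lemma sum_symmetrize_others (h : 'I_m.+1 -> ('I_m -> T) -> R) (theta : 'I_m.+1 -> T) :
  \sum_(i < m.+1) symmetrize h (others theta i) =
  perm_average (fun theta' => \sum_(i < m.+1) h i (others theta' i)) theta.
Proof.
rewrite /symmetrize /perm_average -mulr_sumr factS; congr (_ * _).
under eq_bigr => i _ do rewrite exchange_big.
rewrite exchange_big [RHS]exchange_big; apply: eq_bigr => j _ /=.
exact: sum_others_permute.
Qed.

Variables (D : Type) (v : 'I_m.+1 -> D -> T -> R) (f : ('I_m.+1 -> T) -> D).

Definition total_tax (h : 'I_m.+1 -> ('I_m -> T) -> R) (theta : 'I_m.+1 -> T) : R :=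
  \sum_(i < m.+1) groves_tax v f h i theta.

(* Each player receives the others' utilities, so G is counted m = n-1 times. *)
Lemma total_tax_others h theta :
  total_tax h theta = Gsum v f theta *+ m + \sum_(i < m.+1) h i (others theta i).
Proof.
rewrite /total_tax /groves_tax big_split /=; congr (_ + _).
have others_sum i : \sum_(j < m.+1 | j != i) v j (f theta) (theta j) =
    Gsum v f theta - v i (f theta) (theta i).
  by rewrite /Gsum [in RHS](bigD1 i) //= addrC addrK.
by rewrite (eq_bigr _ (fun i _ => others_sum i)) sumrB sumr_const card_ord mulrSr addrK.
Qed.

Hypothesis G_sym : forall (theta : 'I_m.+1 -> T) (pi : 'S_m.+1),
  Gsum v f (permute theta pi) = Gsum v f theta.

Lemma total_tax_symmetrize h theta :
  total_tax (anon (symmetrize h)) theta = perm_average (total_tax h) theta.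
Proof.
rewrite total_tax_others sum_symmetrize_others /perm_average.
under [in RHS]eq_bigr => s _ do rewrite total_tax_others G_sym.
by rewrite big_split sumr_const card_Sn mulrDr mul_inv_fact_natr.
Qed.

Lemma total_tax_anon (h0 : ('I_m -> T) -> R) theta : @perm_indep R T m.+1 h0 ->
  total_tax (@anon R T m.+1 h0) theta = perm_average (total_tax (@anon R T m.+1 h0)) theta.
Proof.
move=> h0_indep; rewrite -total_tax_symmetrize !total_tax_others.
by congr (_ + _); apply: eq_bigr => i _; rewrite /anon symmetrize_anon.
Qed.

End Symmetrization.

Theorem lemma1 (R : realFieldType) (D Theta0 : Type) (n : nat) (hn : (2 <= n)%N)
  (v : 'I_n -> D -> Theta0 -> R) (f : ('I_n -> Theta0) -> D)
  (hf : efficient v f)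
  (h : 'I_n -> ('I_n.-1 -> Theta0) -> R)
  (hG : forall (theta : 'I_n -> Theta0) (pi : {perm 'I_n}),
          Gsum v f (permute theta pi) = Gsum v f theta) :
  perm_indep (symmetrize h) /\
  (feasible (groves_tax v f h) ->
     feasible (groves_tax v f (anon (symmetrize h)))) /\
  (forall h0 : ('I_n.-1 -> Theta0) -> R, perm_indep h0 ->
     welfare_dominates (groves_tax v f h) (groves_tax v f (anon h0)) ->
     welfare_dominates (groves_tax v f (anon (symmetrize h))) (groves_tax v f (anon h0))).
Proof.
case: n => [|m] in hn v f hf h hG *; first by [].
split; first exact: symmetrize_perm_indep.
split=> [h_feasible theta | h0 h0_indep [h_ge [theta0 h_gt]]].
  change (total_tax v f (anon (symmetrize h)) theta <= 0).
  by rewrite total_tax_symmetrize //; apply: perm_average_le0.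
split=> [theta | ]; [|exists theta0].
  change (total_tax v f (anon h0) theta <= total_tax v f (anon (symmetrize h)) theta).
  by rewrite total_tax_anon // total_tax_symmetrize //; apply: ler_perm_average.
change (total_tax v f (anon h0) theta0 < total_tax v f (anon (symmetrize h)) theta0).
by rewrite total_tax_anon // total_tax_symmetrize //; apply: ltr_perm_average.
Qed.
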